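(* Let $S=\{v_1,\ldots,v_n\}\subset\mathbb Z^n$ ($n\ge1$) be an orthogonal subset with $|V_\alpha|\ge2$ for all $\alpha$ and $\mathcal P_2=\mathcal Q_2$. Then the lattice generated by $S$ is not cubiquitous.
   Context: $\mathbb Z^n$ carries the standard dot product with standard basis $e_1,\ldots,e_n$. $S$ is orthogonal if $\langle v_\alpha,v_\alpha\rangle\ge1$ for all $\alpha$ and $\langle v_\alpha,v_\beta\rangle=0$ for $\alpha\ne\beta$. $V_\alpha=\{j:\langle v_\alpha,e_j\rangle\ne0\}$, $E_j=\{\alpha:\langle v_\alpha,e_j\rangle\ne0\}$, $\mathcal P_2=\{j:|E_j|=2\}$, and $\mathcal Q_2=\{i\in\mathcal P_2: |\langle v_u,e_i\rangle|\ge2 \text{ for some } u\in E_i\}$. A full-rank sublattice $\Lambda\subset\mathbb Z^n$ is cubiquitous if $\Lambda\cap(x+\{0,1\}^n)\ne\emptyset$ for every $x\in\mathbb Z^n$. *)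

From mathcomp Require Import all_boot all_order all_algebra.
Set Implicit Arguments. Unset Strict Implicit. Unset Printing Implicit Defensive.
Import Order.TTheory GRing.Theory Num.Theory.
Local Open Scope ring_scope.

(* A family S = {v_1,...,v_n} in Z^n is encoded by the integer matrix S whose
   row a is v_a; hence S a j = <v_a, e_j>. Vectors of Z^n are 'rV[int]_n. *)

Definition dotZ (n : nat) (u v : 'rV[int]_n) : int := \sum_(j < n) u 0 j * v 0 j.

Definition orthogonal_family (n : nat) (S : 'M[int]_n) : Prop :=
  (forall a : 'I_n, 1 <= dotZ (row a S) (row a S)) /\
  (forall a b : 'I_n, a != b -> dotZ (row a S) (row b S) = 0).

Definition Vsupp (n : nat) (S : 'M[int]_n) (a : 'I_n) : {set 'I_n} :=
  [set j | S a j != 0].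
Definition Ecol (n : nat) (S : 'M[int]_n) (j : 'I_n) : {set 'I_n} :=
  [set a | S a j != 0].
Definition P2 (n : nat) (S : 'M[int]_n) : {set 'I_n} :=
  [set j | #|Ecol S j| == 2%N].
Definition Q2 (n : nat) (S : 'M[int]_n) : {set 'I_n} :=
  [set i in P2 S | [exists u in Ecol S i, 2%:Z <= `|S u i|]].

Definition lattice_of (n : nat) (S : 'M[int]_n) : 'rV[int]_n -> Prop :=
  fun y => exists c : 'rV[int]_n, y = c *m S.

Definition full_rank (n : nat) (L : 'rV[int]_n -> Prop) : Prop :=
  exists B : 'M[int]_n, (forall i, L (row i B)) /\ \det B != 0.

Definition cubiquitous (n : nat) (L : 'rV[int]_n -> Prop) : Prop :=
  full_rank L /\
  forall x : 'rV[int]_n, exists e : 'rV[int]_n,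
    (forall j, e 0 j = 0 \/ e 0 j = 1) /\ L (x + e).

(* If some entry |<v_a, e_i>| is at least 2, a unit cube can be placed so that
   <y, v_a> lies strictly between 0 and k_a = <v_a, v_a> for all its vertices y,
   while <y, v_a> is a multiple of k_a for every lattice vector y.
   Otherwise all entries are 0 or +-1, so P_2 = Q_2 says that no column has
   exactly two nonzero entries, and k_a = |V_a| >= 2.  If every k_a = 2, three
   rows sharing a column would be three pairwise orthogonal vectors with nonzero
   entries in a plane, so every column has at most one nonzero entry, contradicting
   sum_a |V_a| = 2n.  If some k_a >= 3, write a lattice vertex of x + {0,1}^n as
   x + e and put u = 2e - 1 in {+-1}^n.  Bessel's inequality gives
   sum_a <u, v_a>^2 / k_a <= n, with <u, v_a> = 2 c_a k_a - <2x + 1, v_a>.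
   Averaging over x in a box (Z/M)^n with every k_a dividing M, <2x + 1, v_a> is
   equidistributed in its class modulo 2 k_a, which makes the average of the
   left-hand side exceed n; so some cube contains no lattice point. *)

From mathcomp Require Import all_boot all_order all_algebra.
From mathcomp Require Import zify ring lra.
Set Implicit Arguments. Unset Strict Implicit. Unset Printing Implicit Defensive.
Import Order.TTheory GRing.Theory Num.Theory.
Local Open Scope ring_scope.

Section Bessel.
Variables (R : realFieldType) (m n : nat) (A : 'I_m -> 'I_n -> R).
Hypothesis A_orth : forall a b, a != b -> \sum_j A a j * A b j = 0.
Hypothesis A_neq0 : forall a, \sum_j A a j * A a j != 0.

Lemma bessel_ineq (u : 'I_n -> R) :
  \sum_a (\sum_j u j * A a j) ^+ 2 / \sum_j A a j * A a j <= \sum_j u j ^+ 2.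
Proof.
pose d a := \sum_j u j * A a j.
pose l a := d a / \sum_j A a j * A a j.
pose p j := \sum_a l a * A a j.
have dot_p w : \sum_j w j * p j = \sum_a l a * \sum_j w j * A a j.
  under eq_bigr do rewrite big_distrr /=.
  rewrite exchange_big; apply: eq_bigr => a _; rewrite big_distrr.
  by apply: eq_bigr => j _ /=; ring.
have l_d a : l a * d a = d a ^+ 2 / \sum_j A a j * A a j.
  by rewrite /l mulrAC -expr2.
have up : \sum_j u j * p j = \sum_a d a ^+ 2 / \sum_j A a j * A a j.
  by rewrite dot_p; apply: eq_bigr => a _; rewrite -l_d.
have pp : \sum_j p j * p j = \sum_a d a ^+ 2 / \sum_j A a j * A a j.
  rewrite dot_p; apply: eq_bigr => a _; rewrite -l_d; congr (_ * _).
  under eq_bigr do rewrite mulrC.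
  rewrite dot_p (bigD1 a) //= [X in _ + X]big1 ?addr0 => [|b ba].
    by rewrite /l mulfVK.
  by rewrite A_orth ?mulr0 // eq_sym.
have : 0 <= \sum_j (u j - p j) ^+ 2 by apply: sumr_ge0 => j _; exact: sqr_ge0.
have -> : \sum_j (u j - p j) ^+ 2 =
    \sum_j u j ^+ 2 - 2 * \sum_j u j * p j + \sum_j p j * p j.
  by rewrite mulr_sumr -sumrB -big_split; apply: eq_bigr => j _ /=; ring.
rewrite up pp; lra.
Qed.

End Bessel.

Definition sqnorm (n : nat) (S : 'M[int]_n) (a : 'I_n) : int := \sum_j S a j * S a j.

Lemma dotZ_row (n : nat) (S : 'M[int]_n) a b :
  dotZ (row a S) (row b S) = \sum_j S a j * S b j.
Proof. by apply: eq_bigr => j _; rewrite !mxE. Qed.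

Lemma intr_dot (n : nat) (f g : 'I_n -> int) :
  \sum_j (f j)%:~R * (g j)%:~R = (\sum_j f j * g j)%:~R :> rat.
Proof. by rewrite rmorph_sum; apply: eq_bigr => j _; rewrite rmorphM. Qed.

Section OrthogonalFamily.
Variables (n : nat) (S : 'M[int]_n).
Hypothesis S_orth : orthogonal_family S.

Lemma dot_rows_eq0 a b : a != b -> \sum_j S a j * S b j = 0.
Proof. by rewrite -dotZ_row; apply: S_orth.2. Qed.

Lemma sqnorm_ge1 a : 1 <= sqnorm S a.
Proof. by rewrite /sqnorm -dotZ_row; apply: S_orth.1. Qed.

Lemma dot_lattice_row (c : 'rV[int]_n) a :
  \sum_j (c *m S) 0 j * S a j = c 0 a * sqnorm S a.
Proof.
under eq_bigr do rewrite mxE big_distrl /=.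
rewrite exchange_big (bigD1 a) //= [X in _ + X]big1 ?addr0 => [|b ba].
  by rewrite /sqnorm big_distrr; apply: eq_bigr => j _ /=; rewrite mulrA.
under eq_bigr do rewrite -mulrA.
by rewrite -big_distrr /= dot_rows_eq0 ?mulr0.
Qed.

Lemma bessel_int (u : 'I_n -> int) :
  \sum_a ((\sum_j u j * S a j) ^+ 2)%:~R / (sqnorm S a)%:~R <= \sum_j (u j ^+ 2)%:~R :> rat.
Proof.
have orthR a b : a != b -> \sum_j (S a j)%:~R * (S b j)%:~R = 0 :> rat.
  by move=> ab; rewrite intr_dot dot_rows_eq0.
have neq0R a : \sum_j (S a j)%:~R * (S a j)%:~R != 0 :> rat.
  by rewrite intr_dot intr_eq0 -/(sqnorm S a) gt_eqF // (lt_le_trans ltr01 (sqnorm_ge1 a)).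
have := bessel_ineq orthR neq0R (fun j => (u j)%:~R).
under eq_bigr do rewrite !intr_dot -rmorphXn.
by under [X in _ <= X -> _]eq_bigr do rewrite -rmorphXn.
Qed.

End OrthogonalFamily.

(** * An entry of absolute value at least 2 *)

Lemma min_abs_lt_sum_sqr_sub_abs (n : nat) (v : 'I_n -> int) j0 i :
  v j0 != 0 -> (forall j, v j != 0 -> `|v j0| <= `|v j|) ->
  (2 <= #|[set j | v j != 0]|)%N -> 2 <= `|v i| ->
  `|v j0| < \sum_j (v j * v j - `|v j|).
Proof.
move=> vj0 j0_min supp2 vi.
have [j1 [j1_supp j1_j0]] : exists j1, v j1 != 0 /\ j1 != j0.
  have /card_gt1P [x [y []]] := supp2; rewrite !inE => vx vy xy.
  have [xj0|] := eqVneq x j0; last by exists x.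
  by exists y; split; rewrite // -xj0 eq_sym.
have rest_ge0 (P : pred 'I_n) : 0 <= \sum_(j | P j) (v j * v j - `|v j|).
  by apply: sumr_ge0 => j _; nia.
have [mu_eq1|mu_ge2] : `|v j0| = 1 \/ 2 <= `|v j0| by lia.
  by rewrite (bigD1 i) //= ltr_wpDr //; nia.
rewrite (bigD1 j0) //= (bigD1 j1) //= addrA ltr_wpDr //.
have := j0_min _ j1_supp; nia.
Qed.

Lemma cube_dot_window (n : nat) (v : 'I_n -> int) i :
  (2 <= #|[set j | v j != 0]|)%N -> 2 <= `|v i| ->
  exists x : 'rV[int]_n, forall e : 'rV[int]_n, (forall j, e 0 j = 0 \/ e 0 j = 1) ->
    0 < \sum_j (x + e) 0 j * v j < \sum_j v j * v j.
Proof.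
move=> supp2 vi.
have vi0 : v i != 0 by apply: contraTneq vi => ->.
have [j0 vj0 j0_min] := @arg_minnP _ i (fun j => v j != 0) (fun j => absz (v j)) vi0.
have {}j0_min j : v j != 0 -> `|v j0| <= `|v j| by move/j0_min; lia.
have mu_lt := min_abs_lt_sum_sqr_sub_abs vj0 j0_min supp2 vi.
pose x := \row_j (if j == j0 then (if v j < 0 then -2 else 1)
                  else (if v j < 0 then -1 else 0)) : 'rV[int]_n.
exists x => e e01.
have term_bounds j : (if j == j0 then `|v j| else 0) <= (x + e) 0 j * v j <=
                     `|v j| + (if j == j0 then `|v j| else 0).
  by rewrite !mxE; case: (j == j0); case: (e01 j) => ->; case: (ltP (v j) 0); lia.
have sum_j0 : \sum_j (if j == j0 then `|v j| else 0) = `|v j0|.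
  by rewrite -big_mkcond big_pred1_eq.
have lo : `|v j0| <= \sum_j (x + e) 0 j * v j.
  by rewrite -sum_j0; apply: ler_sum => j _; case/andP: (term_bounds j).
have hi : \sum_j (x + e) 0 j * v j <= \sum_j `|v j| + `|v j0|.
  by rewrite -sum_j0 -big_split; apply: ler_sum => j _; case/andP: (term_bounds j).
rewrite sumrB in mu_lt; apply/andP; split.
  by apply: lt_le_trans lo; rewrite normr_gt0.
by apply: le_lt_trans hi _; rewrite -ltrBrDl.
Qed.

Lemma big_entry_not_cubiquitous (n : nat) (S : 'M[int]_n) a i :
  orthogonal_family S -> (2 <= #|Vsupp S a|)%N -> 2 <= `|S a i| ->
  ~ cubiquitous (lattice_of S).
Proof.
move=> S_orth supp2 Sai [_ cub].
have [x window] := cube_dot_window supp2 Sai.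
have [e [e01 [c xe]]] := cub x.
have := window e e01; rewrite xe dot_lattice_row // -/(sqnorm S a).
have := sqnorm_ge1 S_orth a; have [c_le0|c_ge1] := lerP (c 0 a) 0; nia.
Qed.

(** * Rows supported on two coordinates *)

Lemma no_orthogonal_triple_in_plane (R : realDomainType) (p1 p2 p3 q1 q2 q3 : R) :
  p1 * p2 * p3 != 0 ->
  p1 * p2 + q1 * q2 = 0 -> p2 * p3 + q2 * q3 = 0 -> p3 * p1 + q3 * q1 = 0 -> False.
Proof.
move=> p_neq0 o12 o23 o31.
have opp_prod (x y : R) : x + y = 0 -> y = - x by move/eqP; rewrite addrC addr_eq0 => /eqP.
have q_sqr : (q1 * q2 * q3) ^+ 2 = - (p1 * p2 * p3) ^+ 2.
  transitivity ((q1 * q2) * (q2 * q3) * (q3 * q1)); first by ring.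
  by rewrite (opp_prod _ _ o12) (opp_prod _ _ o23) (opp_prod _ _ o31); ring.
have := sqr_ge0 (q1 * q2 * q3); rewrite q_sqr oppr_ge0 leNgt.
by rewrite lt_def sqrf_eq0 p_neq0 sqr_ge0.
Qed.

Section SupportPairs.
Variables (n : nat) (S : 'M[int]_n).

Lemma sum_card_Vsupp : (\sum_a #|Vsupp S a| = \sum_j #|Ecol S j|)%N.
Proof.
have card_nz (T : finType) (P : pred T) : #|[set x | P x]| = (\sum_x P x)%N.
  by rewrite -sum1dep_card big_mkcond; apply: eq_bigr => x _; case: (P x).
under eq_bigr do rewrite card_nz.
by rewrite exchange_big; apply: eq_bigr => j _; rewrite card_nz.
Qed.

Lemma Vsupp_eq_pair a j l : #|Vsupp S a| = 2%N -> j != l -> S a j != 0 -> S a l != 0 ->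
  Vsupp S a = [set j; l].
Proof.
move=> card2 jl aj al; apply/eqP; rewrite eq_sym eqEcard cards2 jl card2 leqnn andbT.
by apply/subsetP => i; rewrite !inE => /orP [] /eqP ->.
Qed.

Lemma dot_supp_pair a j l (w : 'I_n -> int) : Vsupp S a = [set j; l] -> j != l ->
  \sum_i S a i * w i = S a j * w j + S a l * w l.
Proof.
move=> Va jl; rewrite (bigD1 j) // (bigD1 l) 1?eq_sym //= big1 ?addr0 ?addrA // => i /andP [ij il].
have : i \notin Vsupp S a by rewrite Va !inE negb_or ij.
by rewrite inE negbK => /eqP ->; rewrite mul0r.
Qed.

Hypothesis S_orth : orthogonal_family S.
Hypothesis supp2 : forall a, #|Vsupp S a| = 2%N.

Lemma card_Ecol_le2 j : (#|Ecol S j| <= 2)%N.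
Proof.
rewrite leqNgt; apply/card_gt2P => -[a [b [c [[]]]]]; rewrite !inE => aj bj cj [ab bc ca].
have [l] : exists l, l \in Vsupp S a :\ j.
  by apply/card_gt0P; have := cardsD1 j (Vsupp S a); rewrite supp2 inE aj add1n => -[<-].
rewrite !inE => /andP [lj al]; have jl : j != l by rewrite eq_sym.
have ac : a != c by rewrite eq_sym.
have Va := Vsupp_eq_pair (supp2 a) jl aj al.
have orth_pair r s : r != s -> Vsupp S r = [set j; l] ->
    S r j * S s j + S r l * S s l = 0.
  by move=> rs Vr; rewrite -(dot_supp_pair _ Vr jl) (dot_rows_eq0 S_orth).
have V_other r : a != r -> S r j != 0 -> Vsupp S r = [set j; l].
  move=> ar rj; apply: (Vsupp_eq_pair (supp2 r) jl rj); apply/eqP => rl.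
  have /eqP := orth_pair a r ar Va.
  by rewrite rl mulr0 addr0 mulf_eq0 (negbTE aj) (negbTE rj).
have Vb := V_other b ab bj.
have Vc := V_other c ac cj.
apply: (@no_orthogonal_triple_in_plane _ (S a j) (S b j) (S c j) (S a l) (S b l) (S c l)).
- by rewrite !mulf_neq0.
- exact: orth_pair ab Va.
- exact: orth_pair bc Vb.
- exact: orth_pair ca Vc.
Qed.

Lemma supports2_false : (0 < n)%N -> (forall j, #|Ecol S j| != 2%N) -> False.
Proof.
move=> n_gt0 no_col2.
have := sum_card_Vsupp; rewrite (eq_bigr _ (fun a _ => supp2 a)) sum_nat_const card_ord.
have : (\sum_j #|Ecol S j| <= \sum_(j < n) 1)%N.
  by apply: leq_sum => j _; have := card_Ecol_le2 j; have := no_col2 j; lia.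
rewrite sum_nat_const card_ord; lia.
Qed.

End SupportPairs.

(** * Averaging over a box *)

(* A lower bound for min_c (2 c k - t)^2, the squared distance from t to 2kZ:
   it is k^2 when t = k (mod 2k), and at least 1 when k >= 3 and
   t = k - 2 (mod 2k). *)
Definition rho (k t : int) : int :=
  if (2 * k %| t - k)%Z then k * k
  else if (3 <= k) && (2 * k %| t - k + 2)%Z then 1 else 0.

Lemma rho_ge0 k t : 0 <= rho k t.
Proof. by rewrite /rho; case: ifP => _; [nia | case: ifP]. Qed.

Lemma rho_le_sqr k t c : 2 <= k -> rho k t <= (2 * c * k - t) ^+ 2.
Proof.
move=> k_ge2; rewrite /rho; case: ifP => [/dvdzP [q tq]|_].
  have -> : 2 * c * k - t = k * (2 * (c - q) - 1) by lia.
  have : 1 <= (2 * (c - q) - 1) ^+ 2 by nia.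
  nia.
case: ifP => [/andP [k_ge3 /dvdzP [q tq]]|_]; last exact: sqr_ge0.
have -> : 2 * c * k - t = k * (2 * (c - q) - 1) + 2 by lia.
suff : k * (2 * (c - q) - 1) + 2 != 0 by nia.
apply/eqP => h0; have : 1 <= (2 * (c - q) - 1) ^+ 2 by nia.
nia.
Qed.

Lemma exists_ord_dvdz (k z : int) : 0 < k -> exists i : 'I_(absz k), (k %| z + i%:Z)%Z.
Proof.
move=> k_gt0; have r_ge0 := modz_ge0 (- z) (lt0r_neq0 k_gt0).
have r_lt : (absz ((- z) %% k)%Z < absz k)%N by have := ltz_pmod (- z) k_gt0; lia.
exists (Ordinal r_lt); apply/dvdzP; exists (- ((- z) %/ k)%Z).
by have := divz_eq (- z) k; rewrite /= gez0_abs //; lia.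
Qed.

Lemma sum_rho_shifts (k t : int) (T : nat -> int) :
  2 <= k -> (2 %| t - k)%Z -> (forall i, (2 * k %| T i - t - 2 * i%:Z)%Z) ->
  k * k + (if 3 <= k then 1 else 0) <= \sum_(i < absz k) rho k (T i).
Proof.
move=> k_ge2 /dvdzP [h th] T_t.
have T_dvd i m : (k %| h + i%:Z + m)%Z -> (2 * k %| T i - k + 2 * m)%Z.
  move=> k_dvd; have -> : T i - k + 2 * m = (T i - t - 2 * i%:Z) + 2 * (h + i%:Z + m) by lia.
  by rewrite rpredD // dvdz_mul2l.
have k_gt0 : 0 < k by lia.
have [i1 k_i1] := exists_ord_dvdz h k_gt0.
have [i2 k_i2] := exists_ord_dvdz (h + 1) k_gt0.
have rho_i1 : rho k (T i1) = k * k.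
  by move: (T_dvd i1 0); rewrite mulr0 !addr0 => /(_ k_i1); rewrite /rho => ->.
have rho_i2 : 3 <= k -> 1 <= rho k (T i2).
  move=> k_ge3; move: (T_dvd i2 1); rewrite addrAC mulr1 => /(_ k_i2) dvd2.
  by rewrite /rho k_ge3 dvd2; case: ifP => _ //; nia.
have i12 : i1 != i2.
  apply/eqP => i12; move: k_i1 k_i2; rewrite i12 => k_i1 k_i2.
  have : (k %| (h + 1 + i2%:Z) - (h + i2%:Z))%Z by rewrite rpredB.
  have -> : h + 1 + i2%:Z - (h + i2%:Z) = 1 by ring.
  by rewrite dvdz1; lia.
rewrite (bigD1 i1) //= rho_i1 lerD2l.
have rest_ge0 (P : pred 'I_(absz k)) : 0 <= \sum_(i | P i) rho k (T i).
  by apply: sumr_ge0 => i _; apply: rho_ge0.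
case: ifP => [k_ge3|_]; last exact: rest_ge0.
by rewrite (bigD1 i2) 1?eq_sym //= ler_wpDr ?rho_i2.
Qed.

(* Twice the inner product of v_a with the centre x + (1/2, ..., 1/2) of the
   cube x + {0,1}^n. *)
Definition centre_dot (n : nat) (S : 'M[int]_n) a (x : 'rV[int]_n) : int :=
  \sum_j (2 * x 0 j + 1) * S a j.

Lemma centre_dot_sqnorm_even (n : nat) (S : 'M[int]_n) a x :
  (2 %| centre_dot S a x - sqnorm S a)%Z.
Proof.
rewrite /centre_dot /sqnorm -sumrB; apply: rpred_sum => j _.
have [q [r [-> r01]]] : exists q r, S a j = 2 * q + r /\ (r = 0 \/ r = 1).
  exists (S a j %/ 2)%Z, (S a j %% 2)%Z; have := divz_eq (S a j) 2.
  by have := modz_ge0 (S a j) (_ : 2 != 0); have := ltz_pmod (S a j) (_ : 0 < 2); lia.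
apply/dvdzP; case: r01 => ->.
  by exists (2 * x 0 j * q + q - 2 * q * q); ring.
by exists (2 * x 0 j * q + x 0 j - 2 * q * q - q); ring.
Qed.

Definition rho_sum (n : nat) (S : 'M[int]_n) (x : 'rV[int]_n) : rat :=
  \sum_a (rho (sqnorm S a) (centre_dot S a x))%:~R / (sqnorm S a)%:~R.

Section Box.
Variables (n N0 : nat) (S : 'M[int]_n).
Local Notation M := N0.+1.

Definition box_point (x : {ffun 'I_n -> 'I_M}) : 'rV[int]_n := \row_j (x j : nat)%:Z.

Definition modM (z : int) : 'I_M := inord (absz (z %% M%:Z)%Z).

Lemma modM_val z : (modM z : nat)%:Z = (z %% M%:Z)%Z.
Proof.
have := ltz_pmod z (isT : 0 < M%:Z); have := modz_ge0 z (isT : M%:Z != 0).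
by rewrite /modM inordK; lia.
Qed.

Definition shift j0 (eps : int) (i : nat) (x : {ffun 'I_n -> 'I_M}) : {ffun 'I_n -> 'I_M} :=
  [ffun j => if j == j0 then modM ((x j0 : nat)%:Z + eps * i%:Z) else x j].

Lemma shift_inj j0 eps i : injective (shift j0 eps i).
Proof.
move=> x y /ffunP xy; apply/ffunP => j; have := xy j; rewrite !ffunE.
case: eqP => [->|] // /(congr1 (fun o : 'I_M => (o : nat)%:Z)).
rewrite !modM_val => /eqP; rewrite eqz_modDr !modz_small => [/eqP [] /val_inj //||].
- by have := ltn_ord (y j0); lia.
- by have := ltn_ord (x j0); lia.
Qed.

Lemma centre_dot_shift a j0 i x (k : int) : S a j0 * S a j0 = 1 -> (k %| M%:Z)%Z ->
  (2 * k %| centre_dot S a (box_point (shift j0 (S a j0) i x))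
            - centre_dot S a (box_point x) - 2 * i%:Z)%Z.
Proof.
move=> eps2 /dvdzP [r Mr]; set y := shift j0 (S a j0) i x.
have -> : centre_dot S a (box_point y) - centre_dot S a (box_point x) =
    2 * ((y j0 : nat)%:Z - (x j0 : nat)%:Z) * S a j0.
  rewrite /centre_dot -sumrB (bigD1 j0) //= big1 ?addr0 => [|j /negbTE j_j0].
    by rewrite !mxE; ring.
  by rewrite !mxE /y /shift ffunE j_j0; ring.
rewrite /y /shift ffunE eqxx modM_val.
set z := (x j0 : nat)%:Z + S a j0 * i%:Z.
have z_div := divz_eq z M%:Z; set q := (z %/ M%:Z)%Z in z_div.
apply/dvdzP; exists (- q * r * S a j0).
have -> : (z %% M%:Z)%Z = z - q * M%:Z by lia.
rewrite Mr /z; transitivity ((S a j0 * S a j0 - 1) * (2 * i%:Z) + (- q * r * S a j0) * (2 * k)).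
  by ring.
by rewrite eps2 subrr mul0r add0r.
Qed.

Lemma sum_box_rho a j0 (k := sqnorm S a) :
  `|S a j0| = 1 -> (k %| M%:Z)%Z -> 2 <= k ->
  #|{ffun 'I_n -> 'I_M}|%:Z * (k * k + (if 3 <= k then 1 else 0))
    <= k * \sum_(x : {ffun 'I_n -> 'I_M}) rho k (centre_dot S a (box_point x)).
Proof.
move=> unit_j0 k_dvd k_ge2; have eps2 : S a j0 * S a j0 = 1 by lia.
have -> : k * \sum_x rho k (centre_dot S a (box_point x)) =
    \sum_(i < absz k) \sum_x rho k (centre_dot S a (box_point (shift j0 (S a j0) i x))).
  transitivity (\sum_(i < absz k) \sum_x rho k (centre_dot S a (box_point x))).
    by rewrite sumr_const card_ord -mulr_natl; congr (_ * _); lia.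
  by apply: eq_bigr => i _; apply: (reindex_inj (@shift_inj j0 _ i)).
rewrite exchange_big /=.
have -> : #|{ffun 'I_n -> 'I_M}|%:Z * (k * k + (if 3 <= k then 1 else 0)) =
    \sum_(x : {ffun 'I_n -> 'I_M}) (k * k + (if 3 <= k then 1 else 0)).
  by rewrite sumr_const -(mulr_natl _ #|_|); congr (_ * _); rewrite cardT; lia.
apply: ler_sum => x _.
apply: (sum_rho_shifts (t := centre_dot S a (box_point x))
  (T := fun i => centre_dot S a (box_point (shift j0 (S a j0) i x)))) => // [|i].
  exact: centre_dot_sqnorm_even.
exact: centre_dot_shift.
Qed.

Lemma sum_box_rho_sum :
  (forall a, exists j, `|S a j| = 1) -> (forall a, (sqnorm S a %| M%:Z)%Z) ->
  (forall a, 2 <= sqnorm S a) -> (exists a, 3 <= sqnorm S a) ->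
  n%:R * #|{ffun 'I_n -> 'I_M}|%:R < \sum_(x : {ffun 'I_n -> 'I_M}) rho_sum S (box_point x).
Proof.
move=> unit_entry k_dvd k_ge2 [a0 k_ge3].
pose r a (x : {ffun 'I_n -> 'I_M}) : rat :=
  (rho (sqnorm S a) (centre_dot S a (box_point x)))%:~R / (sqnorm S a)%:~R.
have box_gt0 : (0 < #|{ffun 'I_n -> 'I_M}|)%N by apply/card_gt0P; exists [ffun=> ord0].
have div_bound (B k Z : int) : 0 < B -> 2 <= k ->
    B * (k * k + (if 3 <= k then 1 else 0)) <= k * Z -> (B * k <= Z) /\ (3 <= k -> B * k < Z).
  by move=> B_gt0 k_ge2'; case: ifP => k3; split; try move=> k3'; nia.
have mean_r a : (#|{ffun 'I_n -> 'I_M}|%:R <= \sum_x r a x) /\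
                (3 <= sqnorm S a -> #|{ffun 'I_n -> 'I_M}|%:R < \sum_x r a x).
  have [j0 unit_j0] := unit_entry a.
  have := sum_box_rho unit_j0 (k_dvd a) (k_ge2 a).
  have k_gt0 : (0 : rat) < (sqnorm S a)%:~R by rewrite ltr0z; have := k_ge2 a; lia.
  have natr_int m : (m%:R : rat) = (m%:Z)%:~R by [].
  rewrite -mulr_suml -rmorph_sum ler_pdivlMr // ltr_pdivlMr // natr_int -rmorphM ler_int ltr_int.
  by apply: div_bound (k_ge2 a); lia.
rewrite /rho_sum exchange_big /=.
have -> : n%:R * #|{ffun 'I_n -> 'I_M}|%:R = \sum_(a < n) (#|{ffun 'I_n -> 'I_M}|%:R : rat).
  by rewrite sumr_const card_ord mulr_natl.
rewrite (bigD1 a0) //= [X in _ < X](bigD1 a0) //=.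
exact: ltr_leD ((mean_r a0).2 k_ge3) (ler_sum _ (fun a _ => (mean_r a).1)).
Qed.

End Box.

Lemma rho_sum_le_of_cube_vertex (n : nat) (S : 'M[int]_n) (x e c : 'rV[int]_n) :
  orthogonal_family S -> (forall a, 2 <= sqnorm S a) ->
  (forall j, e 0 j = 0 \/ e 0 j = 1) -> x + e = c *m S -> rho_sum S x <= n%:R.
Proof.
move=> S_orth k_ge2 e01 xe.
pose u j := 2 * e 0 j - 1.
have u_sqr : \sum_j ((u j ^+ 2)%:~R : rat) = n%:R.
  rewrite (eq_bigr (fun _ => 1)) ?sumr_const ?card_ord // => j _.
  by rewrite /u; case: (e01 j) => ->.
rewrite -u_sqr; apply: le_trans (bessel_int S_orth u); apply: ler_sum => a _.
have k_gt0 : (0 : rat) < (sqnorm S a)%:~R by rewrite ltr0z; have := k_ge2 a; lia.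
rewrite ler_pM2r ?invr_gt0 // ler_int.
have -> : \sum_j u j * S a j = 2 * c 0 a * sqnorm S a - centre_dot S a x.
  rewrite -mulrA -(dot_lattice_row S_orth) -xe mulr_sumr /centre_dot -sumrB.
  by apply: eq_bigr => j _; rewrite /u mxE; ring.
exact: rho_le_sqr.
Qed.

Lemma exists_rho_sum_gt (n : nat) (S : 'M[int]_n) :
  (forall a, exists j, `|S a j| = 1) -> (forall a, 2 <= sqnorm S a) ->
  (exists a, 3 <= sqnorm S a) -> exists x : 'rV[int]_n, n%:R < rho_sum S x.
Proof.
move=> unit_entry k_ge2 k_ge3.
set M := (\prod_a absz (sqnorm S a))%N.
have M_gt0 : (0 < M)%N by rewrite prodn_gt0 // => a; have := k_ge2 a; lia.
set N0 := M.-1; have N0_M : N0.+1 = M by rewrite prednK.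
have k_dvd a : (sqnorm S a %| N0.+1%:Z)%Z.
  by rewrite N0_M dvdzE absz_nat /M (bigD1 a) //= dvdn_mulr.
have sum_gt := sum_box_rho_sum unit_entry k_dvd k_ge2 k_ge3.
have [x x_gt] : exists x : {ffun 'I_n -> 'I_N0.+1}, n%:R < rho_sum S (box_point x).
  case: (boolP [exists x : {ffun 'I_n -> 'I_N0.+1}, n%:R < rho_sum S (box_point x)]).
    by move/existsP.
  rewrite negb_exists => /forallP all_le.
  have : \sum_(x : {ffun 'I_n -> 'I_N0.+1}) rho_sum S (box_point x) <=
      \sum_(x : {ffun 'I_n -> 'I_N0.+1}) (n%:R : rat).
    by apply: ler_sum => x _; rewrite leNgt all_le.
  by rewrite sumr_const => /(lt_le_trans sum_gt); rewrite mulr_natr ltxx.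
by exists (box_point x).
Qed.

Lemma unit_rows_not_cubiquitous (n : nat) (S : 'M[int]_n) :
  orthogonal_family S -> (forall a, exists j, `|S a j| = 1) ->
  (forall a, 2 <= sqnorm S a) -> (exists a, 3 <= sqnorm S a) ->
  ~ cubiquitous (lattice_of S).
Proof.
move=> S_orth unit_entry k_ge2 k_ge3 [_ cub].
have [x x_gt] := exists_rho_sum_gt unit_entry k_ge2 k_ge3.
have [e [e01 [c xe]]] := cub x.
by have := rho_sum_le_of_cube_vertex S_orth k_ge2 e01 xe; rewrite leNgt x_gt.
Qed.

(** * Entries in {-1, 0, 1} *)

Lemma sqnorm_unit_entries (n : nat) (S : 'M[int]_n) a :
  (forall j, `|S a j| <= 1) -> sqnorm S a = #|Vsupp S a|%:Z.
Proof.
move=> unit_a; rewrite /sqnorm -sum1_card -natz natr_sum [RHS]big_mkcond /=.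
apply: eq_bigr => j _; rewrite inE; have := unit_a j.
case: eqP => [->|Saj_neq0 Saj_le1]; first by rewrite mulr0.
by have [->|->] : S a j = 1 \/ S a j = -1 by lia.
Qed.

Lemma unit_entries_not_cubiquitous (n : nat) (S : 'M[int]_n) :
  (0 < n)%N -> orthogonal_family S -> (forall a, (2 <= #|Vsupp S a|)%N) ->
  (forall a j, `|S a j| <= 1) -> (forall j, #|Ecol S j| != 2%N) ->
  ~ cubiquitous (lattice_of S).
Proof.
move=> n_gt0 S_orth supp_ge2 unit_entries no_col2.
have k_card a := sqnorm_unit_entries (unit_entries a).
have k_ge2 a : 2 <= sqnorm S a by rewrite k_card; have := supp_ge2 a; lia.
have [/existsP k_ge3 | /existsPn k_le2] := boolP [exists a, 3 <= sqnorm S a].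
  apply: (unit_rows_not_cubiquitous S_orth _ k_ge2 k_ge3) => a.
  have /card_gt0P [j] : (0 < #|Vsupp S a|)%N by have := supp_ge2 a; lia.
  by rewrite inE => Saj; exists j; have := unit_entries a j; lia.
case: (supports2_false S_orth _ n_gt0 no_col2) => a.
by have := k_le2 a; have := supp_ge2 a; rewrite k_card; lia.
Qed.

Theorem proposition4p3 (n : nat) (S : 'M[int]_n) :
  (0 < n)%N ->
  orthogonal_family S ->
  (forall a : 'I_n, (2 <= #|Vsupp S a|)%N) ->
  P2 S = Q2 S ->
  ~ cubiquitous (lattice_of S).
Proof.
move=> n_gt0 S_orth supp_ge2 P2_Q2.
have [/existsP [a /existsP [i Sai]] | /existsPn no_big] :=
  boolP [exists a, exists i, 2 <= `|S a i|].
  exact: big_entry_not_cubiquitous S_orth (supp_ge2 a) Sai.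
have unit_entries a j : `|S a j| <= 1.
  by have /existsPn/(_ j) := no_big a; lia.
apply: unit_entries_not_cubiquitous => // j; apply/negP => col2.
have : j \in P2 S by rewrite inE col2.
rewrite P2_Q2 inE => /andP [_ /existsP [u /andP [_ Suj]]].
by have := unit_entries u j; lia.
Qed.
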